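(* Let $H$ be a binary tree based graph and let $S$ be a guarded set of literals over variables of $\phi_H$. Then $\Pr({\bf EC}(S))=2^{-|S\setminus Fix(S)|}$.
   Context: Sets of literals never contain a variable together with its negation. A rooted tree is extended if none of its leaves has a sibling. A graph $H$ is a binary tree based graph if it is the edge-disjoint union of extended rooted trees $T_1,\dots,T_m$ with roots $t_1,\dots,t_m$ such that every leaf of some $T_i$ is a leaf of exactly two of the trees, and any two trees have at most one common vertex, which is a leaf of both. $T_i,T_j$ are adjacent if they share a leaf $\ell_{i,j}$; $P_{i,j}$ is the path between $t_i$ and $t_j$ in $T_i\cup T_j$. A pseudoedge is a pair $\{t_i,t_j\}$ with $T_i,T_j$ adjacent. $\phi_H$ is the CNF on variables $V(H)$ with a clause $C_{i,j}$ (positive literals of $V(P_{i,j})$) for each pseudoedge; the non-leaf variables of $C_{i,j}$ are its variables other than $\ell_{i,j}$. A set $S$ of literals is guarded from $C_{i,j}$ if (1) $\ell_{i,j}$ does not occur in $S$, or (2) some non-leaf variable of $C_{i,j}$ occurs positively in $S$, or (3) $\ell_{i,j}$ occurs positively in $S$ and all other variables of $C_{i,j}$ occur negatively in $S$; $S$ is guarded if it is guarded from every clause of $\phi_H$. The positive literal $\ell_{i,j}$ is fixed w.r.t. $S$ if $\ell_{i,j}\in S$ and all other variables of $C_{i,j}$ occur negatively in $S$; $Fix(S)$ is the set of fixed literals. ${\bf SAT}(H)$ is the set of satisfying assignments of $\phi_H$; each $S'\in{\bf SAT}(H)$ has probability $(1/2)^{|V(H)\setminus Fix(S')|}$. ${\bf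 EC}(S)=\{S'\in{\bf SAT}(H):S\subseteq S'\}$. *)

From HB Require Import structures.
From mathcomp Require Import all_boot all_order all_algebra.
Set Implicit Arguments. Unset Strict Implicit. Unset Printing Implicit Defensive.
Import Order.TTheory GRing.Theory Num.Theory.

(* A binary tree based graph H on vertex type V is given by
   m trees T_i, each described by its (symmetric) edge relation E i : rel V and
   its root t i.  V(H) = V (every vertex lies in some tree), and the edge set
   of H is the (edge-disjoint) union of the E i. *)

Section BTBG.
Variables (V : finType) (m : nat) (E : 'I_m -> rel V) (t : 'I_m -> V).

Definition on_path (e : rel V) (a b v : V) : bool :=
  [exists n : 'I_#|V|, exists p : n.-tuple V,
     [&& path e a p, last a p == b, uniq (a :: p) & v \in a :: p]].

Definition has_cycle (e : rel V) : bool :=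
  [exists n : 'I_#|V|.+1, exists c : n.-tuple V,
     [&& 2 < n, uniq c & cycle e c]].

Definition VT (i : 'I_m) : {set V} :=
  [set v | (v == t i) || [exists w, E i v w]].

Definition is_tree (i : 'I_m) : Prop :=
  [/\ symmetric (E i), irreflexive (E i),
      {in VT i &, forall v w, connect (E i) v w} & ~~ has_cycle (E i)].

Definition child (i : 'I_m) (p w : V) : bool :=
  E i p w && on_path (E i) w (t i) p.

Definition leaf (i : 'I_m) (v : V) : bool :=
  [&& v \in VT i, v != t i & [forall w, ~~ child i v w]].

Definition extended (i : 'I_m) : Prop :=
  forall l, leaf i l -> forall p w, child i p l -> child i p w -> w = l.

Definition binary_tree_based : Prop :=
  [/\ forall i, is_tree i /\ extended i,
      forall i j, i != j -> forall x y, ~~ (E i x y && E j x y),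
      forall v, exists i, v \in VT i,
      forall i v, leaf i v -> #|[set j | leaf j v]| = 2 &
      forall i j, i != j ->
        (forall v, v \in VT i -> v \in VT j -> leaf i v && leaf j v) /\
        (forall v w, v \in VT i :&: VT j -> w \in VT i :&: VT j -> v = w)].

(* variables of the clause C_{i,j}: vertices of the path P_{i,j} between t_i
   and t_j in T_i \cup T_j *)
Definition Cvars (i j : 'I_m) : {set V} :=
  [set v | on_path (fun x y => E i x y || E j x y) (t i) (t j) v].

Definition pseudo (i j : 'I_m) (l : V) : bool :=
  [&& i != j, leaf i l & leaf j l].

(* literals: (v, true) is the positive literal v, (v, false) its negation *)
Definition consistent (S : {set V * bool}) : Prop :=
  forall v, ~~ (((v, true) \in S) && ((v, false) \in S)).

Definition guarded_from (S : {set V * bool}) (i j : 'I_m) (l : V) : bool :=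
  [|| ((l, true) \notin S) && ((l, false) \notin S),
      [exists v in Cvars i j, (v != l) && ((v, true) \in S)]
    | ((l, true) \in S) &&
      [forall v in Cvars i j, (v != l) ==> ((v, false) \in S)]].

Definition guarded (S : {set V * bool}) : Prop :=
  forall i j l, pseudo i j l -> guarded_from S i j l.

Definition Fix (S : {set V * bool}) : {set V * bool} :=
  [set x : V * bool | [&& x.2, x \in S &
     [exists i, exists j, pseudo i j x.1 &&
        [forall v in Cvars i j, (v != x.1) ==> ((v, false) \in S)]]]].

Definition lits (a : {ffun V -> bool}) : {set V * bool} :=
  [set x : V * bool | a x.1 == x.2].

Definition sat (a : {ffun V -> bool}) : bool :=
  [forall i, forall j, forall l, pseudo i j l ==> [exists v in Cvars i j, a v]].

Local Open Scope ring_scope.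

(* probability of S' = lits a : (1/2)^|V(H) \ Fix(S')| *)
Definition weight (a : {ffun V -> bool}) : rat :=
  (2%:R^-1) ^+ #|[set v : V | (v, true) \notin Fix (lits a)]|.

Definition PrEC (S : {set V * bool}) : rat :=
  \sum_(a : {ffun V -> bool} | sat a && (S \subset lits a)) weight a.

End BTBG.

From HB Require Import structures.
From mathcomp Require Import all_boot all_order all_algebra.
Import Order.TTheory GRing.Theory Num.Theory.
Set Implicit Arguments. Unset Strict Implicit. Unset Printing Implicit Defensive.

(* The summand of Pr(EC(S)) at an assignment a factorises over the vertices v:
   the factor of v vanishes if a v contradicts S or, when v is the common leaf
   of a pseudoedge, if a clause with leaf v is violated; otherwise it is 1 if v
   is a fixed leaf and 1/2 if not.  Non-leaf variables of a clause are interior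
   tree vertices, never common leaves, so the factor of a common leaf l reads a
   only at l and at non-leaf variables.  Summing out the common leaves one at a
   time, then the other vertices, therefore replaces each factor by the sum of
   its two values, which by guardedness is 1/2 if v carries an unfixed literal
   of S and 1 otherwise; this leaves 2^-|S \ Fix(S)|. *)

Lemma size_uniq_le_card (T : finType) (s : seq T) : uniq s -> size s <= #|T|.
Proof. by move/card_uniqP <-; apply: max_card. Qed.

Lemma on_pathP (T : finType) (e : rel T) a b v :
  reflect (exists s, [/\ path e a s, last a s = b, uniq (a :: s) & v \in a :: s])
          (on_path e a b v).
Proof.
apply: (iffP existsP) => [[n /existsP [p /and4P [Hp /eqP Hl Hu Hv]]] | [s [Hp Hl Hu Hv]]].
  by exists (tval p).
have Hs : size s < #|T| by have := size_uniq_le_card Hu.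
by exists (Ordinal Hs); apply/existsP; exists (in_tuple s); apply/and4P; rewrite Hl.
Qed.

Lemma uniq_cycle_has_cycle (T : finType) (e : rel T) (c : seq T) :
  2 < size c -> uniq c -> cycle e c -> has_cycle e.
Proof.
move=> Hc Hu Hcy; have Hs : size c < #|T|.+1 by rewrite ltnS size_uniq_le_card.
by apply/existsP; exists (Ordinal Hs); apply/existsP; exists (in_tuple c); rewrite /= Hc Hu Hcy.
Qed.

Lemma path_interior_nbrs (T : eqType) (e : rel T) a s v :
  path e a s -> uniq (a :: s) -> v \in s -> v != last a s ->
  exists u x, [/\ e u v, e v x & u != x].
Proof.
move=> Hp Hu Hv; case/splitPr: Hv Hp Hu => s1 s2.
rewrite cat_path => /andP [_ /= /andP [Huv Hps2]].
case: s2 Hps2 => [|x s2]; first by rewrite last_cat /= eqxx.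
move=> /andP [Hvx _]; rewrite -[_ && _]/(uniq ((a :: s1) ++ _)) cat_uniq => /and3P [_ Hdis _] _.
exists (last a s1), x; split => //; apply: contraNneq Hdis => <-.
by apply/hasP; exists (last a s1); rewrite ?mem_last // !inE eqxx orbT.
Qed.

Section Trees.
Variables (V : finType) (m : nat) (E : 'I_m -> rel V) (t : 'I_m -> V).

Lemma VT_edge i x y : E i x y -> x \in VT E t i.
Proof. by move=> Hxy; rewrite inE; apply/orP; right; apply/existsP; exists y. Qed.

Lemma root_VT i : t i \in VT E t i.
Proof. by rewrite inE eqxx. Qed.

Lemma leaf_VT i v : leaf E t i v -> v \in VT E t i.
Proof. by case/and3P. Qed.

Lemma path_VTU i j x s : symmetric (E i) -> symmetric (E j) ->
  path (fun x y => E i x y || E j x y) x s ->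
  {in s, forall z, (z \in VT E t i) || (z \in VT E t j)}.
Proof.
move=> Hi Hj; elim: s x => [|y s IH] x //= /andP [Hxy Hp] z.
rewrite inE => /predU1P [-> | Hz]; last exact: IH Hp z Hz.
by case/orP: Hxy => H; [rewrite (@VT_edge i y x) // Hi | rewrite (@VT_edge j y x) ?orbT // Hj].
Qed.

Lemma path_VT i x s : symmetric (E i) -> path (E i) x s -> {subset s <= VT E t i}.
Proof.
move=> Hsym Hp z Hz; rewrite -[z \in _]orbb; apply: (path_VTU Hsym Hsym _ Hz).
by apply: sub_path Hp => u w ->.
Qed.

(* The first step of the path from a leaf to the root is its only neighbour:
   any other neighbour would either close a cycle or be a child of the leaf. *)
Lemma leaf_nbr_uniq i w u x :
  is_tree E t i -> leaf E t i w -> E i w u -> E i w x -> u = x.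
Proof.
case=> Hsym Hirr Hconn Hcyc /and3P [Hw Hwt /forallP Hnc].
have /connectP [p Hp Hl] := Hconn _ _ Hw (root_VT i).
move: Hl; case: (shortenP Hp) => q Hq Hu _ Hl.
case: q Hq Hu Hl => [|y q] Hq Hu Hl; first by move: Hwt; rewrite Hl /= eqxx.
suff nbr_y z : E i w z -> z = y by move=> /nbr_y -> /nbr_y ->.
move=> Hz; apply/eqP/negPn/negP => Hzy.
case Hzq: (z \in q).
  case/splitPr: Hzq Hq Hu Hl => q1 q2 Hq Hu _.
  case/negP: Hcyc; apply: (@uniq_cycle_has_cycle _ _ (w :: y :: rcons q1 z)).
  - by rewrite /= size_rcons.
  - move: Hu; rewrite -cat_rcons -[w :: y :: (_ ++ _)]/((w :: y :: rcons q1 z) ++ q2).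
    by rewrite cat_uniq => /andP [].
  - rewrite /= rcons_path last_rcons [E i z w]Hsym Hz andbT.
    by move: Hq; rewrite /= cat_path rcons_path => /and3P [-> -> /andP [-> _]].
have Hch : child E t i w z.
  rewrite /child Hz; apply/on_pathP; exists (w :: y :: q); split.
  - by rewrite /= Hsym Hz.
  - by rewrite Hl.
  - rewrite cons_uniq Hu andbT !inE negb_or Hzq orbF Hzy andbT.
    by apply: contraTneq Hz => ->; rewrite Hirr.
  - by rewrite !inE eqxx orbT.
by move: (Hnc z); rewrite Hch.
Qed.

End Trees.

Section BinaryTreeBased.
Variables (V : finType) (m : nat) (E : 'I_m -> rel V) (t : 'I_m -> V).
Hypothesis HB : binary_tree_based E t.

Lemma leaf_shared k i w : leaf E t k w -> w \in VT E t i -> leaf E t i w.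
Proof.
case: HB => _ _ _ _ Hsh Hk Hi; have [<- // | Hki] := eqVneq k i.
by case: (Hsh k i Hki) => /(_ w (leaf_VT Hk) Hi) /andP [].
Qed.

Lemma root_not_leaf k i : ~~ leaf E t k (t i).
Proof.
apply/negP => /leaf_shared /(_ (root_VT E t i)) /and3P [_].
by rewrite eqxx.
Qed.

Lemma VT_shared i j l v : i != j -> leaf E t i l -> leaf E t j l ->
  v \in VT E t i -> v \in VT E t j -> v = l.
Proof.
case: HB => _ _ _ _ Hsh Hij Hli Hlj Hvi Hvj.
by case: (Hsh i j Hij) => _; apply; rewrite inE ?Hvi ?Hvj ?leaf_VT.
Qed.

Lemma pseudo_Cvars i j l : pseudo E t i j l -> l \in Cvars E t i j.
Proof.
case: HB => Htr _ _ _ _ /and3P [Hij Hli Hlj].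
have [[Hsi _ Hci _] _] := Htr i; have [[Hsj _ Hcj _] _] := Htr j.
have /connectP [p Hp] := Hci _ _ (root_VT E t i) (leaf_VT Hli).
case: (shortenP Hp) => q Hq Hu _ Hl.
have /connectP [p' Hp'] := Hcj _ _ (leaf_VT Hlj) (root_VT E t j).
case: (shortenP Hp') => r Hr Hur _ Hl'.
rewrite inE; apply/on_pathP; exists (q ++ r); split.
- rewrite cat_path -Hl; apply/andP; split.
    by apply: sub_path Hq => x y ->.
  by apply: sub_path Hr => x y ->; rewrite orbT.
- by rewrite last_cat -Hl.
- rewrite -cat_cons cat_uniq Hu /=; move: Hur => /= /andP [Hlr ->]; rewrite andbT.
  apply/hasPn => x Hxr; apply: contraNN Hlr => Hxq.
  suff <- : x = l by [].
  apply: (VT_shared Hij Hli Hlj _ (path_VT t Hsj Hr Hxr)).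
  by case/predU1P: Hxq => [-> | /(path_VT t Hsi Hq)]; first exact: root_VT.
- by rewrite -cat_cons mem_cat Hl mem_last.
Qed.

Lemma leaf_nbrU_uniq a b w u x : leaf E t a w -> w \notin VT E t b ->
  E a w u || E b w u -> E a w x || E b w x -> u = x.
Proof.
case: HB => Htr _ _ _ _ Hw Hwb.
have edge y : E a w y || E b w y -> E a w y.
  by case/orP => // /(VT_edge t); rewrite (negbTE Hwb).
by move=> /edge Hu /edge Hx; apply: (leaf_nbr_uniq (Htr a).1 Hw).
Qed.

(* A non-leaf variable of C_{i,j} has two distinct neighbours on P_{i,j}, and
   they lie in the only one of T_i, T_j containing it. *)
Lemma Cvars_not_leaf i j l w k : pseudo E t i j l -> w \in Cvars E t i j ->
  w != l -> ~~ leaf E t k w.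
Proof.
move=> /and3P [Hij Hli Hlj] Hw Hwl; apply/negP => Hkw.
case: HB => Htr _ _ _ _.
have [[Hsi _ _ _] _] := Htr i; have [[Hsj _ _ _] _] := Htr j.
have Hwti : w != t i by apply: contraTneq Hkw => ->; apply: root_not_leaf.
have Hwtj : w != t j by apply: contraTneq Hkw => ->; apply: root_not_leaf.
move: Hw; rewrite inE => /on_pathP [s [Hs Hl Hu Hws]].
rewrite inE (negbTE Hwti) /= in Hws.
have Hw_last : w != last (t i) s by rewrite Hl.
have [u [x [Hwu Hwx /eqP[]]]] := path_interior_nbrs Hs Hu Hws Hw_last.
rewrite [E i u w]Hsi [E j u w]Hsj in Hwu.
have Hnot_both : ~~ ((w \in VT E t i) && (w \in VT E t j)).
  by apply/negP => /andP [Hwi Hwj]; rewrite (VT_shared Hij Hli Hlj Hwi Hwj) eqxx in Hwl.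
case/orP: (path_VTU t Hsi Hsj Hs Hws) => Hw; rewrite Hw /= ?andbT in Hnot_both.
- exact: leaf_nbrU_uniq (leaf_shared Hkw Hw) Hnot_both Hwu Hwx.
- by apply: (leaf_nbrU_uniq (leaf_shared Hkw Hw) Hnot_both); rewrite orbC.
Qed.

End BinaryTreeBased.

Section Averaging.
Variables (V : finType) (R : numFieldType).
Local Open Scope ring_scope.

Definition ffun_upd (a : {ffun V -> bool}) (l : V) (b : bool) : {ffun V -> bool} :=
  [ffun x => if x == l then b else a x].

Lemma ffun_updE a l b x : ffun_upd a l b x = if x == l then b else a x.
Proof. by rewrite ffunE. Qed.

Lemma ffun_upd_id (a : {ffun V -> bool}) v : ffun_upd a v (a v) = a.
Proof. by apply/ffunP => x; rewrite ffun_updE; case: eqP => // ->. Qed.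

(* Pair each assignment with the one obtained by flipping the value at l. *)
Lemma sum_mul_avg (l : V) (G : {ffun V -> bool} -> R)
    (h : bool -> {ffun V -> bool} -> R) c :
  (forall a b, G (ffun_upd a l b) = G a) ->
  (forall a b b', h b (ffun_upd a l b') = h b a) ->
  (forall a, G a != 0 -> h true a + h false a = c) ->
  \sum_a G a * h (a l) a = c / 2%:R * \sum_a G a.
Proof.
move=> HG Hh Hc.
pose flip a := ffun_upd a l (~~ a l).
have flipK : involutive flip.
  move=> a; apply/ffunP => x; rewrite !ffun_updE eqxx negbK.
  by case: eqP => // ->.
have sum_flip : \sum_a G a * h (a l) a = \sum_a G a * h (~~ a l) a.
  rewrite (reindex_inj (inv_inj flipK)); apply: eq_bigr => a _.
  by rewrite /flip HG Hh ffun_updE eqxx.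
have sum_twice : (\sum_a G a * h (a l) a) *+ 2 = c * \sum_a G a.
  rewrite mulr2n {2}sum_flip -big_split mulr_sumr; apply: eq_bigr => a _.
  rewrite /= -mulrDr; have [-> | HGa] := eqVneq (G a) 0; first by rewrite !mul0r mulr0.
  by rewrite mulrC; case: (a l); rewrite /= -(Hc _ HGa) // addrC.
by rewrite mulrAC -sum_twice -mulr_natr mulfK // pnatr_eq0.
Qed.

Lemma sum_mul_prod_avg (s : seq V) (Psi : {ffun V -> bool} -> R)
    (phi : V -> bool -> {ffun V -> bool} -> R) (c : V -> R) :
  uniq s ->
  (forall l, l \in s -> forall a b, Psi (ffun_upd a l b) = Psi a) ->
  (forall l l', l \in s -> l' \in s ->
     forall a b b', phi l' b (ffun_upd a l b') = phi l' b a) ->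
  (forall l, l \in s -> forall a, Psi a != 0 -> phi l true a + phi l false a = c l) ->
  \sum_a Psi a * \prod_(l <- s) phi l (a l) a = \prod_(l <- s) (c l / 2%:R) * \sum_a Psi a.
Proof.
elim: s Psi => [|l s IH] Psi /= Hu HPsi Hphi Hc.
  by rewrite big_nil mul1r; apply: eq_bigr => a _; rewrite big_nil mulr1.
case/andP: Hu => Hls Hu.
have sub x : x \in s -> x \in l :: s by move=> Hx; rewrite inE Hx orbT.
transitivity (\sum_a (Psi a * \prod_(l' <- s) phi l' (a l') a) * phi l (a l) a).
  by apply: eq_bigr => a _; rewrite big_cons mulrCA mulrC.
rewrite (sum_mul_avg (c := c l)) => [|a b|a b b'|a HG].
- rewrite big_cons -mulrA IH ?mulrA // => [x /sub|x y /sub Hx /sub|x /sub].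
  + exact: HPsi.
  + exact: Hphi.
  + exact: Hc.
- rewrite HPsi ?mem_head //; congr (_ * _); apply: eq_big_seq => l' Hl'.
  have Hne : (l' == l) = false by apply: contraNF Hls => /eqP <-.
  by rewrite ffun_updE Hne Hphi ?mem_head ?sub.
- by rewrite Hphi ?mem_head.
- by apply: (Hc l (mem_head _ _)); apply: contraNneq HG => ->; rewrite mul0r.
Qed.

End Averaging.

Section BigProducts.
Variables (T : finType) (R : comNzRingType).
Local Open Scope ring_scope.

Lemma prod_if1 (P : pred T) (x : R) :
  \prod_v (if P v then 1 else x) = x ^+ #|[set v | ~~ P v]|.
Proof.
rewrite -prodr_const [RHS]big_mkcond; apply: eq_bigr => v _.
by rewrite inE; case: (P v).
Qed.

Lemma prod_nat_bool (P : pred T) : \prod_v (P v)%:R = [forall v, P v]%:R :> R.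
Proof.
have [/forallP HP | /forallPn [v HPv]] := boolP [forall v, P v].
  by apply: big1 => v _; rewrite HP.
by rewrite (bigD1 v) //= (negbTE HPv) mul0r.
Qed.

Lemma prod_setC (A : {set T}) (F : T -> R) :
  \prod_(v in A) F v * \prod_(v in ~: A) F v = \prod_v F v.
Proof.
rewrite [RHS](bigID (mem A)) /=.
by congr (_ * _); apply: eq_bigl => v; rewrite !inE.
Qed.

End BigProducts.

Section Factors.
Variables (V : finType) (m : nat) (E : 'I_m -> rel V) (t : 'I_m -> V) (S : {set V * bool}).
Local Open Scope ring_scope.
Implicit Type a : {ffun V -> bool}.

Definition shared_leaves : {set V} := [set v | [exists i, exists j, pseudo E t i j v]].

Definition clauses_sat v a :=
  [forall i, forall j, pseudo E t i j v ==> [exists w in Cvars E t i j, a w]].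

Definition forces v a :=
  [exists i, exists j, pseudo E t i j v && [forall w in Cvars E t i j, (w != v) ==> ~~ a w]].

Definition compat v b := (v, ~~ b) \notin S.

Definition factor v b a : rat :=
  (compat v b && clauses_sat v (ffun_upd a v b))%:R *
  (if b && forces v a then 1 else 2%:R^-1).

Definition mass v : rat := if [exists b, (v, b) \in S :\: Fix E t S] then 2%:R^-1 else 1.

Lemma pseudo_shared i j v : pseudo E t i j v -> v \in shared_leaves.
Proof. by move=> Hp; rewrite inE; apply/existsP; exists i; apply/existsP; exists j. Qed.

Lemma forces_shared v a : forces v a -> v \in shared_leaves.
Proof. by case/existsP => i /existsP [j /andP [/pseudo_shared]]. Qed.

Lemma Fix_shared v b : (v, b) \in Fix E t S -> v \in shared_leaves.
Proof. by rewrite inE => /and3P [_ _ /existsP [i /existsP [j /andP [/pseudo_shared]]]]. Qed.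

Lemma clauses_sat_nonshared v a : v \notin shared_leaves -> clauses_sat v a.
Proof.
move=> Hv; apply/forallP => i; apply/forallP => j; apply/implyP => /pseudo_shared.
by rewrite (negbTE Hv).
Qed.

Lemma Fix_lits a v : ((v, true) \in Fix E t (lits a)) = a v && forces v a.
Proof.
rewrite inE /= inE /= eqb_id; congr (_ && _).
apply: eq_existsb => i; apply: eq_existsb => j; congr (_ && _).
by apply: eq_forallb => w; rewrite [(w, false) \in _]inE /= eqbF_neg.
Qed.

Lemma subset_litsE a : (S \subset lits a) = [forall v, compat v (a v)].
Proof.
apply/subsetP/forallP => [HS v | Hc [v b] HvS].
  by apply/negP => /HS; rewrite inE /=; case: (a v).
by rewrite inE /=; move: (Hc v); rewrite /compat; case: b HvS; case: (a v) => // ->.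
Qed.

Lemma sat_clausesE a : sat E t a = [forall v, clauses_sat v a].
Proof.
apply/forallP/forallP => H x; apply/forallP => y; apply/forallP => z.
  by move/forallP: (H y) => /(_ z) /forallP /(_ x).
by move/forallP: (H z) => /(_ x) /forallP /(_ y).
Qed.

Lemma PrEC_termE a :
  (if sat E t a && (S \subset lits a) then weight E t a else 0) = \prod_v factor v (a v) a.
Proof.
rewrite /factor big_split /=.
under eq_bigr do rewrite ffun_upd_id.
rewrite prod_nat_bool prod_if1.
have -> : [forall v, compat v (a v) && clauses_sat v a] = sat E t a && (S \subset lits a).
  rewrite sat_clausesE subset_litsE.
  by apply/forallP/andP => [H | [/forallP H1 /forallP H2] v];
    [split; apply/forallP => v; case/andP: (H v) | rewrite H1 H2].
case: (_ && _); rewrite /= ?mul0r // mul1r /weight.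
by congr (_ ^+ _); apply: eq_card => v; rewrite inE [RHS]inE Fix_lits.
Qed.

Lemma clauses_sat_upd_false l a : clauses_sat l (ffun_upd a l false) = ~~ forces l a.
Proof.
rewrite /forces negb_exists; apply: eq_forallb => i; rewrite negb_exists; apply: eq_forallb => j.
rewrite negb_and implybE negb_forall_in; congr (_ || _); apply: eq_existsb => w.
by rewrite ffun_updE negb_imply negbK; case: (w == l); rewrite ?andbF.
Qed.

Lemma clauses_sat_ext v a1 a2 :
  (forall i j w, pseudo E t i j v -> w \in Cvars E t i j -> a1 w = a2 w) ->
  clauses_sat v a1 = clauses_sat v a2.
Proof.
move=> Ha; apply: eq_forallb => i; apply: eq_forallb => j.
case Hp: (pseudo E t i j v) => //=; apply: eq_existsb => w.
by case Hw: (w \in Cvars E t i j); rewrite //= (Ha i j w).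
Qed.

Lemma forces_ext v a1 a2 :
  (forall i j w, pseudo E t i j v -> w \in Cvars E t i j -> w != v -> a1 w = a2 w) ->
  forces v a1 = forces v a2.
Proof.
move=> Ha; apply: eq_existsb => i; apply: eq_existsb => j.
case Hp: (pseudo E t i j v) => //=; apply: eq_forallb => w.
case Hw: (w \in Cvars E t i j) => //=.
by case Hwv: (w != v); rewrite //= (Ha i j w).
Qed.

Lemma factor_nonshared v b a :
  v \notin shared_leaves -> factor v b a = (compat v b)%:R * 2%:R^-1.
Proof.
move=> Hv; rewrite /factor clauses_sat_nonshared // andbT.
case Hf: (forces v a); last by rewrite andbF.
by rewrite (forces_shared Hf) in Hv.
Qed.

Lemma massE v : mass v = if ((v, true) \in S) && ((v, true) \notin Fix E t S) || ((v, false) \in S)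
  then 2%:R^-1 else 1.
Proof.
rewrite /mass; congr (if _ then _ else _); apply/existsP/idP.
  by case=> -[]; rewrite in_setD => /andP [HF HS]; rewrite HS ?HF ?orbT.
case/orP => [/andP [H1 H2] | H]; first by exists true; rewrite in_setD H1 H2.
by exists false; rewrite in_setD H andbT inE.
Qed.

Lemma prod_mass : consistent S -> \prod_v mass v = 2%:R^-1 ^+ #|S :\: Fix E t S|.
Proof.
move=> Hcons; under eq_bigr do rewrite /mass -if_neg.
have Hinj : {in S :\: Fix E t S &, injective (@fst V bool)}.
  move=> [v b] [v' b'] /setDP [H1 _] /setDP [H2 _] /= Hvv; subst v'.
  by case: b b' H1 H2 => -[] H1 H2 //; move: (Hcons v); rewrite H1 H2.
rewrite prod_if1 -(card_in_imset Hinj); congr (_ ^+ _); apply: eq_card => v.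
rewrite !inE negbK; apply/existsP/imsetP => [[b Hb] | [[v' b] Hx ->]].
  by exists (v, b).
by exists b.
Qed.

Section Guarded.
Hypotheses (HB : binary_tree_based E t) (Hcons : consistent S) (Hguard : guarded E t S).

Lemma Cvars_not_shared i j l w : pseudo E t i j l -> w \in Cvars E t i j -> w != l ->
  w \notin shared_leaves.
Proof.
move=> Hp Hw Hwl; rewrite inE negb_exists; apply/forallP => k; rewrite negb_exists.
by apply/forallP => k'; apply: contraNN (Cvars_not_leaf HB k Hp Hw Hwl) => /and3P [].
Qed.

Lemma mass_nonshared v a : v \notin shared_leaves -> factor v true a + factor v false a = mass v.
Proof.
move=> Hv; rewrite !factor_nonshared // massE /compat /=.
have -> : (v, true) \notin Fix E t S by apply: contraNN Hv => /Fix_shared.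
by move: (Hcons v); case: ((v, true) \in S); case: ((v, false) \in S);
  rewrite //= ?mul1r ?mul0r ?add0r ?addr0.
Qed.

Lemma factor_upd_shared l l' a b b' : l \in shared_leaves -> l' \in shared_leaves ->
  factor l' b (ffun_upd a l b') = factor l' b a.
Proof.
move=> Hl Hl'; have Hnl i j w : pseudo E t i j l' -> w \in Cvars E t i j -> w != l' -> w != l.
  by move=> Hp Hw Hwl; apply: contraNneq (Cvars_not_shared Hp Hw Hwl) => ->.
rewrite /factor (@forces_ext l' (ffun_upd a l b') a) => [|i j w Hp Hw Hwl]; last first.
  by rewrite ffun_updE (negbTE (Hnl i j w Hp Hw Hwl)).
rewrite (@clauses_sat_ext l' _ (ffun_upd a l' b)) // => i j w Hp Hw.
rewrite !ffun_updE; case: eqP => // /eqP Hwl.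
by rewrite (negbTE (Hnl i j w Hp Hw Hwl)).
Qed.

Lemma clauses_sat_upd_true l a : clauses_sat l (ffun_upd a l true).
Proof.
apply/forallP => i; apply/forallP => j; apply/implyP => Hp.
by apply/existsP; exists l; rewrite pseudo_Cvars // ffun_updE eqxx.
Qed.

Section CompatibleAssignment.
Variable a : {ffun V -> bool}.
Hypothesis Ha : forall v, v \notin shared_leaves -> compat v (a v).

Lemma compat_true v : v \notin shared_leaves -> (v, true) \in S -> a v.
Proof. by move=> /Ha; rewrite /compat; case: (a v) => //= /negbTE ->. Qed.

Lemma compat_false v : v \notin shared_leaves -> (v, false) \in S -> ~~ a v.
Proof. by move=> /Ha; rewrite /compat; case: (a v) => //= /negbTE ->. Qed.

Lemma forces_guarded l : forces l a ->
  ((l, true) \notin S) && ((l, false) \notin S) || ((l, true) \in Fix E t S).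
Proof.
case/existsP => i /existsP [j /andP [Hp /forallP Hf]].
case/or3P: (Hguard Hp) => [-> // | /existsP [v /and3P [Hv Hvl HvS]] | /andP [Hl Hall]].
  have := compat_true (Cvars_not_shared Hp Hv Hvl) HvS.
  by move: (Hf v); rewrite Hv Hvl /= => /negbTE ->.
apply/orP; right; rewrite inE /= Hl /=.
by apply/existsP; exists i; apply/existsP; exists j; rewrite Hp.
Qed.

Lemma Fix_forces l : (l, true) \in Fix E t S -> forces l a.
Proof.
rewrite inE /= => /andP [_ /existsP [i /existsP [j /andP [Hp /forallP Hall]]]].
apply/existsP; exists i; apply/existsP; exists j; rewrite Hp /=.
apply/forallP => w; apply/implyP => Hw; apply/implyP => Hwl.
apply: compat_false; first exact: Cvars_not_shared Hp Hw Hwl.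
by move: (Hall w); rewrite Hw Hwl.
Qed.

Lemma mass_shared l : factor l true a + factor l false a = mass l.
Proof.
rewrite /factor clauses_sat_upd_false clauses_sat_upd_true massE /compat /= andbT.
have := Hcons l.
case Ht: ((l, true) \in S); case Hf: ((l, false) \in S) => //= _.
- have -> : forces l a = ((l, true) \in Fix E t S).
    by apply/idP/idP => [/forces_guarded | /Fix_forces]; rewrite ?Ht.
  by case: ((l, true) \in Fix E t S); rewrite /= ?mul1r ?mul0r ?addr0.
- have -> : forces l a = false.
    apply/negbTE/negP => /forces_guarded; rewrite Hf andbF /=.
    by rewrite inE /= Ht.
  by rewrite !mul0r !mul1r add0r.
- by case: (forces l a); rewrite /= !mul1r ?addr0 ?add0r.
Qed.

End CompatibleAssignment.

End Guarded.
End Factors.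

Section Summation.
Variables (V : finType) (m : nat) (E : 'I_m -> rel V) (t : 'I_m -> V) (S : {set V * bool}).
Hypotheses (HB : binary_tree_based E t) (Hcons : consistent S) (Hguard : guarded E t S).
Local Open Scope ring_scope.
Local Notation L := (shared_leaves E t).
Local Notation f := (factor E t S).

Lemma sum_factors_shared :
  \sum_(a : {ffun V -> bool}) (\prod_(v in ~: L) f v (a v) a * \prod_(v in L) f v (a v) a) =
  \prod_(v in L) (mass E t S v / 2%:R) *
  \sum_(a : {ffun V -> bool}) \prod_(v in ~: L) f v (a v) a.
Proof.
rewrite -[X in _ = X * _]big_enum /=.
under [in LHS]eq_bigr do rewrite -[X in _ * X]big_enum.
apply: sum_mul_prod_avg => [|l + a b|l l' + + a b b'|l + a HPsi]; rewrite ?mem_enum.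
- exact: enum_uniq.
- move=> Hl; apply: eq_bigr => v; rewrite in_setC => Hv.
  have Hvl : (v == l) = false by apply: contraNF Hv => /eqP ->.
  by rewrite !factor_nonshared // ffun_updE Hvl.
- exact: factor_upd_shared.
- move=> _; apply: mass_shared => // v Hv; move: HPsi; apply: contraNT => Hc.
  rewrite (bigD1 v) ?in_setC //=.
  by rewrite factor_nonshared // (negbTE Hc) !mul0r.
Qed.

Lemma sum_factors_nonshared :
  \sum_(a : {ffun V -> bool}) \prod_(v in ~: L) f v (a v) a =
  \prod_(v in ~: L) (mass E t S v / 2%:R) * 2%:R ^+ #|V|.
Proof.
have := @sum_mul_prod_avg V _ (enum (~: L)) (fun=> 1) f (mass E t S) (enum_uniq _).
rewrite !big_enum sumr_const card_ffun card_bool -natrX => <- //.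
- by apply: eq_bigr => a _; rewrite mul1r big_enum.
- by move=> l l'; rewrite !mem_enum !in_setC => Hl Hl' a b b'; rewrite !factor_nonshared.
- by move=> l; rewrite mem_enum in_setC => Hl a _; apply: mass_nonshared.
Qed.

End Summation.

Local Open Scope ring_scope.

Theorem lemma14 (V : finType) (m : nat) (E : 'I_m -> rel V) (t : 'I_m -> V)
  (S : {set V * bool}) :
  binary_tree_based E t -> consistent S -> guarded E t S ->
  PrEC E t S = (2%:R^-1) ^+ #|S :\: Fix E t S|.
Proof.
move=> HB Hcons Hguard; set L := shared_leaves E t.
rewrite /PrEC big_mkcond /=.
under eq_bigr do rewrite PrEC_termE -(prod_setC L) mulrC.
rewrite sum_factors_shared // sum_factors_nonshared // mulrA prod_setC big_split /=.
rewrite prodr_const -mulrA -exprMn mulVf ?pnatr_eq0 // expr1n mulr1.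
exact: prod_mass.
Qed.
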